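(* Let $x\in X(l_1,\dots,l_n,l_\infty)$ and let $S\subseteq\{1,\dots,n\}$ be a set of indices with $l_i$ equal for all $i\in S$. For every permutation $\sigma$ of $S$, the diagram obtained from $x$ by moving each label $z_i$, $i\in S$, to the position originally occupied by $z_{\sigma(i)}$ (keeping all other labels and the unlabelled arc configuration unchanged) lies in the same $J_n$-orbit as $x$.
   Context: Cactus group: $J_n$ is the group generated by $s_{p,q}$, $1\le p<q\le n$, subject to the relations $s_{p,q}^2=e$; $s_{p,q}s_{p',q'}=s_{p',q'}s_{p,q}$ if $[p,q]$ and $[p',q']$ are disjoint; $s_{p,q}s_{p',q'}s_{p,q}=s_{p+q-q',p+q-p'}$ if $p\le p'<q'\le q$. Arc diagrams: fix nonnegative integers $l_1,\dots,l_n,l_\infty$. On the boundary circle of a closed disc place $n+1$ marked positions: position $0$ (occupied by $z_\infty$) and positions $1,\dots,n$ following it clockwise. An arc diagram is a bijective assignment of labels $z_1,\dots,z_n$ to positions $1,\dots,n$ together with a finite collection of simple arcs in the disc, pairwise disjoint except at endpoints, each joining two distinct marked points, such that $z_j$ is an endpoint of exactly $l_j$ arcs ($j\in\{1,\dots,n,\infty\}$; $l_j$ is the valence). Parallel arcs are allowed; diagrams are up to isotopy, equivalently determined by the labelling and the number of arcs between each pair of marked points. $X(l_1,\dots,l_n,l_\infty)$ is the set of such diagrams. Action: $s_{p,q}$ ($1\le p<q\le n$) acts by cutting off positions $p,\dots,q$ with a chord $\ell$ (arcs isotoped to cross $\ell$ at most once), reflecting that region by the reflection reversing $\ell$ (label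 at position $p+t$ goes to position $q-t$, crossing points on $\ell$ reversed), leaving the rest unchanged and reconnecting arcs at $\ell$. Words act right to left; this is an action of $J_n$. *)

From mathcomp Require Import all_boot.
Set Implicit Arguments. Unset Strict Implicit. Unset Printing Implicit Defensive.

(* Conventions.
   - Marked positions on the circle are 'I_n.+1: position 0 is the position
     of z_oo, positions 1..n follow it clockwise.
   - Labels are also encoded in 'I_n.+1: label 0 stands for z_oo, label j
     (1 <= j <= n) stands for z_j.
   - Valences: l : 'I_n.+1 -> nat, l 0 = l_oo, l j = l_j.
   - A (raw) diagram is a pair (lab, arcs): lab P = label sitting at
     position P, arcs (P, Q) = number of arcs between positions P and Q. *)

Definition raw_diagram (n : nat) :=
  ({ffun 'I_n.+1 -> 'I_n.+1} * {ffun 'I_n.+1 * 'I_n.+1 -> nat})%type.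

Definition dlab n (x : raw_diagram n) := x.1.
Definition darcs n (x : raw_diagram n) := x.2.

Definition is_arc_diagram n (l : 'I_n.+1 -> nat) (x : raw_diagram n) : Prop :=
  [/\ injective (dlab x) /\
      dlab x ord0 = ord0,
      (forall P Q, darcs x (P, Q) = darcs x (Q, P)),
      (forall P, darcs x (P, P) = 0),
      (forall P Q R T : 'I_n.+1, P < Q -> Q < R -> R < T ->
         darcs x (P, R) = 0 \/ darcs x (Q, T) = 0)
    & (forall P, \sum_(Q < n.+1) darcs x (P, Q) = l (dlab x P))].

Section Action.
Variables (n p q : nat).

(* inside the region cut off by the chord ℓ *)
Definition inside (i : 'I_n.+1) : bool := (p <= i) && (i <= q).

Definition refl (i : 'I_n.+1) : 'I_n.+1 :=
  if inside i then inord (p + q - i) else i.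

Definition innerL : seq 'I_n.+1 := [seq inord k | k <- iota p (q - p).+1].
(* outer positions in the order their arcs meet ℓ (from the p-end):
   p-1, ..., 1, 0, n, ..., q+1 *)
Definition outerL : seq 'I_n.+1 :=
  [seq inord k | k <- rev (iota 0 p) ++ rev (iota q.+1 (n - q))].

(* the arcs crossing ℓ, as (inner end, outer end), in order along ℓ *)
Definition crossing (a : {ffun 'I_n.+1 * 'I_n.+1 -> nat}) :
    seq ('I_n.+1 * 'I_n.+1) :=
  flatten [seq flatten [seq nseq (a (i, o)) (i, o) | o <- outerL] | i <- innerL].

(* after reflection, the k-th crossing point keeps its outer segment and gets
   the reflection of the inner segment of the (m+1-k)-th crossing point *)
Definition crossing' (a : {ffun 'I_n.+1 * 'I_n.+1 -> nat}) :=
  let C := crossing a in zip [seq refl io.1 | io <- rev C] [seq io.2 | io <- C].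

Definition act_arcs (a : {ffun 'I_n.+1 * 'I_n.+1 -> nat}) :
    {ffun 'I_n.+1 * 'I_n.+1 -> nat} :=
  [ffun PQ : 'I_n.+1 * 'I_n.+1 =>
     let: (P, Q) := PQ in
     if inside P && inside Q then a (refl P, refl Q)
     else if ~~ inside P && ~~ inside Q then a (P, Q)
     else if inside P then count_mem (P, Q) (crossing' a)
     else count_mem (Q, P) (crossing' a)].

Definition act_lab (f : {ffun 'I_n.+1 -> 'I_n.+1}) : {ffun 'I_n.+1 -> 'I_n.+1} :=
  [ffun P => f (refl P)].

Definition cactus_act (x : raw_diagram n) : raw_diagram n :=
  (act_lab (dlab x), act_arcs (darcs x)).
End Action.

(* y lies in the J_n-orbit of x: since every generator s_{p,q} is an
   involution in J_n, the group elements are exactly the finite words in the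
   generators; words act right to left. *)
Definition same_Jn_orbit n (x y : raw_diagram n) : Prop :=
  exists w : seq (nat * nat),
    all (fun pq => (1 <= pq.1) && (pq.1 < pq.2) && (pq.2 <= n)) w /\
    foldr (fun pq d => cactus_act pq.1 pq.2 d) x w = y.

(* A transposition of two positions P < Q whose labels have the same valence
   is realised by cactus moves that leave the arcs unchanged.  For Q = P+1,
   s_{P,Q} swaps the two endpoints; as both send the same number of arcs out
   of the region {P, Q}, every arc is reattached where it was.  For Q > P+1,
   conjugate by s_{P+1,Q}: it moves Q next to P, and on non-crossing diagrams
   it is an involution, so the arcs are restored.  A permutation of labels of
   equal valence is a product of such transpositions. *)

From mathcomp Require Import all_boot all_fingroup zify.
Set Implicit Arguments. Unset Strict Implicit. Unset Printing Implicit Defensive.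

Lemma pairwise_rev (T : Type) (r : rel T) (s : seq T) :
  pairwise r (rev s) = pairwise (fun x y => r y x) s.
Proof.
elim: s => // x s IHs; rewrite rev_cons -cats1 pairwise_cat IHs /= andbT.
by rewrite allrel1r all_rev.
Qed.

Lemma pairwise_iota (r : rel nat) (m k : nat) :
  {in iota m k &, forall i j, i < j -> r i j} -> pairwise r (iota m k).
Proof.
move=> lt_r; apply: (sub_in_pairwise (r := ltn) lt_r); first exact/allP.
by rewrite -sorted_pairwise ?iota_ltn_sorted //; apply: ltn_trans.
Qed.

Lemma pairwise_flatten_nseq (T : eqType) (r : rel T) (f : T -> nat) (s : seq T) :
  reflexive r -> pairwise r s -> pairwise r (flatten [seq nseq (f x) x | x <- s]).
Proof.
move=> r_refl; elim: s => //= x s IHs /andP[rx rs]; rewrite pairwise_cat IHs // andbT.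
apply/andP; split.
  apply/allrelP => _ _ /nseqP[-> _] /flatten_mapP[y ys /nseqP[-> _]].
  exact: (allP rx).
by elim: (f x) => //= k ->; rewrite andbT; apply/allP => _ /nseqP[-> _].
Qed.

Lemma count_mem_flatten_nseq (T : eqType) (f : T -> nat) (s : seq T) (x : T) :
  uniq s -> count_mem x (flatten [seq nseq (f y) y | y <- s]) = (x \in s) * f x.
Proof.
elim: s => //= y s IHs /andP[ys uniq_s]; rewrite count_cat count_nseq IHs // in_cons.
by rewrite /= eq_sym; have [<-|_] := eqVneq y x; rewrite ?(negbTE ys) ?mul1n ?addn0.
Qed.

Lemma flatten_allpairs (A B C : Type) (h : A * B -> seq C) (s : seq A) (t : seq B) :
  flatten [seq flatten [seq h (x, y) | y <- t] | x <- s] =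
  flatten [seq h z | z <- [seq (x, y) | x <- s, y <- t]].
Proof. by elim: s => //= x s ->; rewrite map_cat flatten_cat -map_comp. Qed.

Lemma all_zip (S T : Type) (a1 : pred S) (a2 : pred T) (s : seq S) (t : seq T) :
  all a1 s -> all a2 t -> all (fun z => a1 z.1 && a2 z.2) (zip s t).
Proof.
by elim: s t => [|x s IHs] [|y t] //= /andP[-> /IHs a1s] /andP[-> /a1s].
Qed.

Lemma pairwise_zip (S T : Type) (r1 : rel S) (r2 : rel T) (s : seq S) (t : seq T) :
  pairwise r1 s -> pairwise r2 t ->
  pairwise (fun z z' => r1 z.1 z'.1 && r2 z.2 z'.2) (zip s t).
Proof.
elim: s t => [|x s IHs] [|y t] //= /andP[r1x r1s] /andP[r2y r2t].
rewrite IHs // andbT.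
by apply: (all_zip (a1 := r1 x) (a2 := r2 y)).
Qed.

Lemma sum_count_mem_fst (T : eqType) (J : finType) (P : pred J) (s : seq (T * J)) (x : T) :
  all (fun z => P z.2) s ->
  \sum_(j | P j) count_mem (x, j) s = count_mem x [seq z.1 | z <- s].
Proof.
elim: s => [|[y j] s IHs] /=; first by rewrite big1.
move=> /andP[Pj /IHs <-]; rewrite big_split /=; congr (_ + _).
rewrite (bigD1 j) //= big1 ?addn0 => [|k /andP[_ kj]]; first by rewrite xpair_eqE eqxx andbT.
by rewrite xpair_eqE [j == k]eq_sym (negbTE kj) andbF.
Qed.

Lemma sum_count_mem_snd (I : finType) (T : eqType) (P : pred I) (s : seq (I * T)) (x : T) :
  all (fun z => P z.1) s ->
  \sum_(i | P i) count_mem (i, x) s = count_mem x [seq z.2 | z <- s].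
Proof.
move=> Ps; have := @sum_count_mem_fst T I P [seq (z.2, z.1) | z <- s] x.
rewrite all_map -map_comp => <- //; apply: eq_bigr => i _.
by rewrite count_map; apply: eq_count => -[? ?]; rewrite /= !xpair_eqE andbC.
Qed.

Lemma perm_on_tperm_ind (T : finType) (A : {set T}) (Pr : {perm T} -> Prop) :
  Pr 1%g ->
  (forall s x y, x \in A -> y \in A -> x != y -> Pr s -> Pr (s * tperm x y)%g) ->
  forall s, perm_on A s -> Pr s.
Proof.
move=> Pr1 PrM; suff PrB k (B : {set T}) (s : {perm T}) :
  B \subset A -> #|B| <= k -> perm_on B s -> Pr s by move=> s; apply: PrB.
elim: k B s => [|k IHk] B s sBA cardB sB.
  by rewrite (perm_on_id sB) // (leq_trans cardB).
have [B0|[x xB]] := set_0Vmem B; first by rewrite (perm_on_id sB) // B0 cards0.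
have sBxA : B :\ x \subset A by apply: subset_trans sBA; apply: subsetDl.
have cardBx : #|B :\ x| <= k by move: cardB; rewrite (cardsD1 x B) xB.
have [sxx|nsxx] := eqVneq (s x) x.
  apply: IHk sBxA cardBx _; apply/subsetP => z; rewrite !inE => szz.
  by rewrite (subsetP sB) ?andbT //; apply: contraNneq szz => ->; apply/eqP.
set s' := (s * tperm x (s x))%g.
have -> : s = (s' * tperm x (s x))%g by rewrite -mulgA tperm2 mulg1.
have sxB : s x \in B by rewrite perm_closed.
apply: PrM; [exact: (subsetP sBA) | exact: (subsetP sBA) | by rewrite eq_sym |].
apply: IHk sBxA cardBx _; apply/subsetP => z; rewrite !inE => s'z.
apply/andP; split.
  by apply: contraNneq s'z => ->; rewrite permM tpermR.
have tB : perm_on B (tperm x (s x)).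
  by apply: subset_trans (tperm_on _ _) _; apply/subsetP => w; rewrite !inE => /orP[]/eqP->.
by apply: (subsetP (perm_onM sB tB)); rewrite inE.
Qed.

Section ArcConditions.
Variable n : nat.
Implicit Type a : {ffun 'I_n.+1 * 'I_n.+1 -> nat}.

Definition arcs_sym a := forall P Q, a (P, Q) = a (Q, P).
Definition arcs_loopless a := forall P, a (P, P) = 0.
Definition noncrossing a := forall P Q R T : 'I_n.+1,
  P < Q -> Q < R -> R < T -> a (P, R) = 0 \/ a (Q, T) = 0.
Definition valence a (P : 'I_n.+1) := \sum_(Q < n.+1) a (P, Q).

End ArcConditions.

Section Reflection.
Variables (n p q : nat).
Hypotheses (lt_pq : p < q) (le_qn : q <= n).
Local Notation I := 'I_n.+1.
Local Notation ins := (@inside n p q).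
Local Notation rf := (@refl n p q).
Local Notation arcs := {ffun I * I -> nat}.
Implicit Type a : arcs.

Lemma val_refl (i : I) : rf i = (if ins i then p + q - i else i) :> nat.
Proof. by rewrite /refl; case: ifP => // /andP[pi iq]; rewrite inordK //; lia. Qed.

Lemma inside_refl (i : I) : ins (rf i) = ins i.
Proof. by rewrite /inside val_refl /inside; case: ifP => // /andP[pi iq]; apply/andP; lia. Qed.

Lemma reflK : involutive rf.
Proof.
move=> i; apply: ord_inj; rewrite !val_refl inside_refl.
by case hi: (ins i) => //; move/andP: hi => pi_iq; lia.
Qed.

Lemma refl_inj : injective rf. Proof. exact: inv_inj reflK. Qed.

Lemma refl_out (i : I) : ~~ ins i -> rf i = i.
Proof. by rewrite /refl => /negbTE ->. Qed.

Lemma mem_innerL (i : I) : (i \in innerL n p q) = ins i.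
Proof.
apply/mapP/idP => [[k] | /andP[pi iq]].
  by rewrite mem_iota => /andP[pk kq] ->; rewrite /inside inordK; lia.
by exists (i : nat); rewrite ?inord_val // mem_iota; lia.
Qed.

Lemma uniq_innerL : uniq (innerL n p q).
Proof.
rewrite map_inj_in_uniq ?iota_uniq // => k1 k2; rewrite !mem_iota => k1pq k2pq /(congr1 (@nat_of_ord _)).
by rewrite /= !inordK; lia.
Qed.

Lemma mem_outerL (i : I) : (i \in outerL n p q) = ~~ ins i.
Proof.
apply/mapP/idP => [[k] | out_i].
  by rewrite mem_cat !mem_rev !mem_iota => k_out ->; rewrite /inside inordK; lia.
exists (i : nat); rewrite ?inord_val // mem_cat !mem_rev !mem_iota.
by move: out_i (ltn_ord i); rewrite /inside; lia.
Qed.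

Lemma uniq_outerL : uniq (outerL n p q).
Proof.
rewrite map_inj_in_uniq => [|k1 k2].
  rewrite cat_uniq !rev_uniq !iota_uniq /= andbT; apply/hasPn => k.
  by rewrite !mem_rev !mem_iota => k_gt_q; lia.
rewrite !mem_cat !mem_rev !mem_iota => k1_out k2_out /(congr1 (@nat_of_ord _)).
by rewrite !inordK; lia.
Qed.

(* Position of an outer point along the chord, counted from its p-end:
   p-1, ..., 1, 0, n, ..., q+1 get the ranks 1, 2, .... *)
Definition chord_rank (o : I) : nat := if o < p then p - o else p + n.+1 - o.

Lemma chord_rank_inj : injective chord_rank.
Proof.
move=> o o'; have := ltn_ord o; have := ltn_ord o'; rewrite /chord_rank.
by case: ifP => o_p; case: ifP => o'_p lt_o' lt_o ranks; apply: ord_inj; lia.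
Qed.

Lemma pairwise_innerL : pairwise (fun i j : I => i < j) (innerL n p q).
Proof.
rewrite pairwise_map; apply: pairwise_iota => k1 k2; rewrite !mem_iota /= => k1pq k2pq lt_k.
by rewrite !inordK; lia.
Qed.

Lemma pairwise_outerL :
  pairwise (fun o o' => chord_rank o < chord_rank o') (outerL n p q).
Proof.
rewrite pairwise_map pairwise_cat !pairwise_rev.
apply/and3P; split; [apply/allrelP | apply: pairwise_iota | apply: pairwise_iota].
all: move=> k1 k2; rewrite ?mem_rev !mem_iota /= => k1_in k2_in *.
all: rewrite /chord_rank !inordK; try lia.
all: by case: ifP => c1; case: ifP => c2; lia.
Qed.

Definition cross_le (z z' : I * I) : bool :=
  (z.1 < z'.1) || (z.1 == z'.1 :> nat) && (chord_rank z.2 <= chord_rank z'.2).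

Lemma cross_le_refl : reflexive cross_le.
Proof. by move=> z; rewrite /cross_le eqxx leqnn orbT. Qed.

Lemma cross_le_trans : transitive cross_le.
Proof. by move=> z' z z''; rewrite /cross_le; lia. Qed.

Lemma cross_le_anti : antisymmetric cross_le.
Proof.
move=> [i o] [i' o']; rewrite /cross_le /= => le_zz'.
have -> : i = i' by apply: ord_inj; lia.
by have /chord_rank_inj -> : chord_rank o = chord_rank o' by lia.
Qed.

Local Notation chord_pairs := [seq (i, o) | i <- innerL n p q, o <- outerL n p q].

Lemma crossingE a : crossing p q a = flatten [seq nseq (a z) z | z <- chord_pairs].
Proof. exact: (flatten_allpairs (fun z => nseq (a z) z)). Qed.

Lemma count_crossing a z :
  count_mem z (crossing p q a) = (ins z.1 && ~~ ins z.2) * a z.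
Proof.
rewrite crossingE count_mem_flatten_nseq; last first.
  by rewrite allpairs_uniq ?uniq_innerL ?uniq_outerL // => -[? ?] [? ?].
congr (nat_of_bool _ * _); apply/allpairsP/andP => [[[i o] [/= iL oL ->]]|[zin zout]].
  by rewrite -mem_innerL -mem_outerL iL oL.
by exists z; rewrite mem_innerL mem_outerL; split => //; case: z {zin zout}.
Qed.

Lemma mem_crossing a z :
  z \in crossing p q a -> [/\ ins z.1, ~~ ins z.2 & 0 < a z].
Proof.
rewrite -has_pred1 has_count count_crossing.
by case: (ins z.1); case: (ins z.2) => //=; rewrite mul1n.
Qed.

Lemma pairwise_crossing a : pairwise cross_le (crossing p q a).
Proof.
rewrite crossingE; apply: pairwise_flatten_nseq cross_le_refl _.
elim: (innerL n p q) pairwise_innerL => //= i I' IHi /andP[lt_i pw_I].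
rewrite pairwise_cat IHi // andbT; apply/andP; split.
  apply/allrelP => _ _ /mapP[o _ ->] /allpairsP[[j o'] /= [jI _ ->]].
  by rewrite /cross_le /= (allP lt_i).
rewrite pairwise_map; apply: sub_pairwise pairwise_outerL => o o' lt_o.
by rewrite /cross_le /= ltnn eqxx ltnW.
Qed.

(* Two crossing arcs with inner ends i < i' reach the chord in the order of
   their inner ends; otherwise they would cross inside the disc. *)
Lemma pairwise_chord_rank a : arcs_sym a -> noncrossing a ->
  pairwise (fun o o' => chord_rank o <= chord_rank o') [seq z.2 | z <- crossing p q a].
Proof.
move=> sym_a nc_a; rewrite pairwise_map.
have cross (P Q R T : I) : P < Q -> Q < R -> R < T -> 0 < a (P, R) -> 0 < a (Q, T) -> False.
  by move=> PQ QR RT; case: (nc_a P Q R T PQ QR RT) => ->.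
apply: (sub_in_pairwise (P := mem (crossing p q a)) (r := cross_le)) (pairwise_crossing a); last exact/allP.
move=> [i o] [i' o'] /mem_crossing[/= i_in o_out a_io] /mem_crossing[/= i'_in o'_out a_io'].
rewrite /cross_le /= => /orP[lt_i|/andP[_ //]].
have a_oi : 0 < a (o, i) by rewrite sym_a.
have a_oi' : 0 < a (o', i') by rewrite sym_a.
rewrite leqNgt; apply/negP; move: i_in i'_in o_out o'_out; rewrite /inside /chord_rank.
have := ltn_ord o; have := ltn_ord o'.
case: ifP => o'_p; case: ifP => o_p lt_o' lt_o i_in i'_in o_out o'_out lt_rank; try lia.
- by apply: (cross o o' i i') => //; lia.
- by apply: (cross o' i i' o) => //; lia.
- by apply: (cross i i' o o') => //; lia.
Qed.

Lemma crossing'_fst a :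
  [seq z.1 | z <- crossing' p q a] = [seq rf z.1 | z <- rev (crossing p q a)].
Proof. by rewrite /crossing' -/(unzip1 _) unzip1_zip // !size_map size_rev. Qed.

Lemma crossing'_snd a :
  [seq z.2 | z <- crossing' p q a] = [seq z.2 | z <- crossing p q a].
Proof. by rewrite /crossing' -/(unzip2 _) unzip2_zip // !size_map size_rev. Qed.

Lemma crossing'E a :
  crossing' p q a = zip [seq z.1 | z <- crossing' p q a] [seq z.2 | z <- crossing' p q a].
Proof. exact/esym/zip_unzip. Qed.

Lemma all_crossing a : all (fun z => ins z.1 && ~~ ins z.2) (crossing p q a).
Proof. by apply/allP => z /mem_crossing[-> -> _]. Qed.

Lemma all_crossing' a : all (fun z => ins z.1 && ~~ ins z.2) (crossing' p q a).
Proof.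
rewrite crossing'E crossing'_fst crossing'_snd.
apply: (all_zip (a1 := ins) (a2 := predC ins)); rewrite all_map; apply/allP => z /=.
  by rewrite mem_rev inside_refl => /mem_crossing[].
by case/mem_crossing.
Qed.

Lemma pairwise_fst_crossing' a :
  pairwise (fun i j : I => i <= j) [seq z.1 | z <- crossing' p q a].
Proof.
rewrite crossing'_fst pairwise_map pairwise_rev.
apply: (sub_in_pairwise (P := mem (crossing p q a)) (r := cross_le)) (pairwise_crossing a); last exact/allP.
move=> z z' /mem_crossing[z_in _ _] /mem_crossing[z'_in _ _].
by move: z_in z'_in; rewrite /cross_le /= !val_refl /inside => -> ->; lia.
Qed.

Lemma pairwise_crossing' a : arcs_sym a -> noncrossing a ->
  pairwise cross_le (crossing' p q a).
Proof.
move=> sym_a nc_a; rewrite crossing'E.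
have := pairwise_zip (pairwise_fst_crossing' a) (pairwise_chord_rank sym_a nc_a).
by rewrite -crossing'_snd; apply: sub_pairwise => z z'; rewrite /cross_le; lia.
Qed.

(* Since the arcs do not cross, crossing' is again sorted, hence it is the
   canonical enumeration of the crossing points of the reflected arcs. *)
Lemma crossing_act_arcs a : arcs_sym a -> noncrossing a ->
  crossing p q (act_arcs p q a) = crossing' p q a.
Proof.
move=> sym_a nc_a; apply: (sorted_eq (leT := cross_le) cross_le_trans cross_le_anti).
- by rewrite sorted_pairwise ?pairwise_crossing //; apply: cross_le_trans.
- by rewrite sorted_pairwise ?pairwise_crossing' //; apply: cross_le_trans.
apply/allP => -[P Q] _; apply/eqP; rewrite count_crossing ffunE /=.
case: (boolP (ins P)) => P_in; case: (boolP (ins Q)) => Q_in //=; rewrite ?mul1n //.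
all: rewrite mul0n; apply/esym/count_memPn/(contra (allP (all_crossing' a) (P, Q))).
all: by move: P_in Q_in; case: (ins P); case: (ins Q).
Qed.

Lemma crossing'_act_arcs a : arcs_sym a -> noncrossing a ->
  crossing' p q (act_arcs p q a) = crossing p q a.
Proof.
move=> sym_a nc_a; rewrite -[RHS]zip_unzip {1}/crossing' crossing_act_arcs //.
rewrite crossing'_snd map_rev; congr zip.
rewrite (map_comp rf fst) crossing'_fst -!map_rev revK -map_comp.
by apply: eq_map => z; rewrite /= reflK.
Qed.

Lemma act_arcsK a : arcs_sym a -> noncrossing a -> act_arcs p q (act_arcs p q a) = a.
Proof.
move=> sym_a nc_a; apply/ffunP => -[P Q]; rewrite !ffunE /= crossing'_act_arcs //.
case: (boolP (ins P)) => P_in; case: (boolP (ins Q)) => Q_in /=.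
- by rewrite !inside_refl P_in Q_in /= !reflK.
- by apply: etrans (count_crossing a (P, Q)) _; rewrite /= P_in Q_in mul1n.
- by apply: etrans (count_crossing a (Q, P)) _; rewrite /= P_in Q_in mul1n sym_a.
- by [].
Qed.

Lemma count_fst_crossing a X :
  count_mem X [seq z.1 | z <- crossing p q a] = ins X * \sum_(o | ~~ ins o) a (X, o).
Proof.
rewrite -(sum_count_mem_fst (P := predC ins)); last first.
  by apply: sub_all (all_crossing a) => z /andP[].
rewrite big_distrr; apply: eq_bigr => o /= o_out.
by apply: etrans (count_crossing a (X, o)) _; rewrite /= o_out andbT.
Qed.

Lemma count_snd_crossing a X :
  count_mem X [seq z.2 | z <- crossing p q a] = ~~ ins X * \sum_(i | ins i) a (i, X).
Proof.
rewrite -(sum_count_mem_snd (P := ins)); last first.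
  by apply: sub_all (all_crossing a) => z /andP[].
rewrite big_distrr; apply: eq_bigr => i i_in.
by apply: etrans (count_crossing a (i, X)) _; rewrite /= i_in mulnC.
Qed.

Lemma count_fst_crossing' a X :
  count_mem X [seq z.1 | z <- crossing' p q a] = ins X * \sum_(o | ~~ ins o) a (rf X, o).
Proof.
rewrite crossing'_fst count_map count_rev -inside_refl -count_fst_crossing count_map.
by apply: eq_count => z; rewrite /= -(inj_eq refl_inj) reflK.
Qed.

Lemma act_arcs_sym a : arcs_sym a -> arcs_sym (act_arcs p q a).
Proof. by move=> sym_a P Q; rewrite !ffunE /=; case: (ins P); case: (ins Q). Qed.

Lemma act_arcs_loopless a : arcs_loopless a -> arcs_loopless (act_arcs p q a).
Proof. by move=> loop_a P; rewrite ffunE /=; case: (ins P); rewrite /= loop_a. Qed.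

Lemma valence_act_arcs a X : arcs_sym a -> valence (act_arcs p q a) X = valence a (rf X).
Proof.
move=> sym_a; rewrite /valence (bigID ins) [RHS](bigID ins) /=.
case: (boolP (ins X)) => X_in.
- congr (_ + _).
    rewrite [RHS](reindex_inj refl_inj) /=; apply: eq_big => [Q|Q Q_in]; first by rewrite inside_refl.
    by rewrite ffunE /= X_in Q_in.
  rewrite -[RHS]mul1n -[1]/(nat_of_bool true) -X_in -count_fst_crossing'.
  rewrite -(sum_count_mem_fst (P := predC ins)).
    by apply: eq_bigr => Q /= Q_out; rewrite ffunE /= X_in (negbTE Q_out).
  by apply: sub_all (all_crossing' a) => z /andP[].
rewrite refl_out //; congr (_ + _); last first.
  by apply: eq_bigr => Q /negbTE Q_out; rewrite ffunE /= (negbTE X_in) Q_out.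
have -> : \sum_(Q | ins Q) a (X, Q) = \sum_(Q | ins Q) a (Q, X).
  by apply: eq_bigr => Q _; rewrite sym_a.
rewrite -[RHS]mul1n -[1]/(nat_of_bool true) -X_in -count_snd_crossing -crossing'_snd.
rewrite -(sum_count_mem_snd (P := ins)).
  by apply: eq_bigr => Q Q_in; rewrite ffunE /= (negbTE X_in) Q_in.
by apply: sub_all (all_crossing' a) => z /andP[].
Qed.

Section Adjacent.
Hypothesis adj_pq : q = p.+1.
Local Notation P0 := (inord p : I).
Local Notation Q0 := (inord q : I).

Lemma inside_adjacent (X : I) : ins X = (X == P0) || (X == Q0).
Proof. by rewrite /inside -!(inj_eq (@ord_inj _)) !inordK; lia. Qed.

Lemma refl_adjacent_l : rf P0 = Q0.
Proof. by apply: ord_inj; rewrite val_refl inside_adjacent eqxx /= !inordK; lia. Qed.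

Lemma refl_adjacent_r : rf Q0 = P0.
Proof. by rewrite -refl_adjacent_l reflK. Qed.

Lemma refl_adjacentE : rf =1 tperm P0 Q0.
Proof.
move=> X; case: tpermP => [->|->|X_P0 X_Q0]; rewrite ?refl_adjacent_l ?refl_adjacent_r //.
by rewrite refl_out // inside_adjacent negb_or; apply/andP; split; apply/eqP.
Qed.

Lemma refl_adjacentK a X Y : arcs_sym a -> arcs_loopless a ->
  ins X -> ins Y -> a (rf X, rf Y) = a (X, Y).
Proof.
move=> sym_a loop_a; rewrite !inside_adjacent.
by case/orP=> /eqP-> /orP[]/eqP->; rewrite ?refl_adjacent_l ?refl_adjacent_r ?loop_a // sym_a.
Qed.

Lemma crossing'_adjacent a : arcs_sym a -> arcs_loopless a ->
  valence a P0 = valence a Q0 -> crossing' p q a = crossing p q a.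
Proof.
move=> sym_a loop_a val_eq.
have out_eq X : ins X -> \sum_(o | ~~ ins o) a (rf X, o) = \sum_(o | ~~ ins o) a (X, o).
  have in_eq : \sum_(o | ins o) a (Q0, o) = \sum_(o | ins o) a (P0, o).
    rewrite -refl_adjacent_l [LHS](reindex_inj refl_inj) /=.
    have P0_in : ins P0 by rewrite inside_adjacent eqxx.
    apply: eq_big => [o|o o_in]; first by rewrite inside_refl.
    by rewrite refl_adjacentK // -(inside_refl o).
  move: val_eq; rewrite /valence (bigID ins) [RHS](bigID ins) /= in_eq => /addnI out_PQ.
  by rewrite inside_adjacent => /orP[]/eqP->; rewrite ?refl_adjacent_l ?refl_adjacent_r out_PQ.
rewrite crossing'E crossing'_snd -[RHS]zip_unzip; congr zip.
have leq_anti : antisymmetric (fun i j : I => i <= j).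
  by move=> i j le_ij; apply: ord_inj; apply/eqP; rewrite eqn_leq.
apply: (sorted_eq (leT := fun i j : I => i <= j) _ leq_anti).
- by move=> j i k; apply: leq_trans.
- by rewrite sorted_pairwise ?pairwise_fst_crossing' //; move=> j i k; apply: leq_trans.
- rewrite sorted_pairwise; last by move=> j i k; apply: leq_trans.
  rewrite pairwise_map; apply: sub_pairwise (pairwise_crossing a) => z z'.
  by rewrite /cross_le => /orP[/ltnW|/andP[/eqP h _]]; rewrite /= ?h.
apply/allP => X _; apply/eqP.
apply: etrans (count_fst_crossing' a X) (etrans _ (esym (count_fst_crossing a X))).
by case X_in: (ins X) => //; congr (_ * _); apply: out_eq.
Qed.

Lemma act_arcs_adjacent a : arcs_sym a -> arcs_loopless a ->
  valence a P0 = valence a Q0 -> act_arcs p q a = a.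
Proof.
move=> sym_a loop_a val_eq; apply/ffunP => -[P Q]; rewrite ffunE /=.
rewrite crossing'_adjacent //.
case: (boolP (ins P)) => P_in; case: (boolP (ins Q)) => Q_in /=.
- exact: refl_adjacentK.
- by apply: etrans (count_crossing a (P, Q)) _; rewrite /= P_in Q_in mul1n.
- by apply: etrans (count_crossing a (Q, P)) _; rewrite /= P_in Q_in mul1n sym_a.
- by [].
Qed.
End Adjacent.
End Reflection.

Lemma tperm_conj_involutive (T : finType) (f : T -> T) (x y z : T) :
  involutive f -> f (tperm x y (f z)) = tperm (f x) (f y) z.
Proof.
move=> fK; have f_inj := inv_inj fK.
case: (tpermP (f x)) => [->|->|zx zy]; rewrite ?fK ?tpermL ?tpermR //.
by rewrite tpermD ?fK //; apply/eqP => /(congr1 f); rewrite fK => ?; [apply: zx | apply: zy].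
Qed.

Section Relabelling.
Variable n : nat.
Local Notation I := 'I_n.+1.
Local Notation arcs := {ffun I * I -> nat}.
Implicit Type a : arcs.

Definition cactus_word (w : seq (nat * nat)) :=
  all (fun pq => (1 <= pq.1) && (pq.1 < pq.2) && (pq.2 <= n)) w.

Definition act_word (w : seq (nat * nat)) (x : raw_diagram n) :=
  foldr (fun pq d => cactus_act pq.1 pq.2 d) x w.

Definition word_relabels a (f : I -> I) := exists2 w, cactus_word w &
  forall g : {ffun I -> I}, act_word w (g, a) = ([ffun X => g (f X)], a).

Lemma word_relabels_id a : word_relabels a id.
Proof. by exists [::] => // g; congr pair; apply/ffunP => X; rewrite ffunE. Qed.

Lemma word_relabels_comp a f1 f2 :
  word_relabels a f1 -> word_relabels a f2 -> word_relabels a (f2 \o f1).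
Proof.
move=> [w1 w1_ok w1_act] [w2 w2_ok w2_act]; exists (w1 ++ w2).
  by rewrite /cactus_word all_cat; apply/andP.
move=> g; rewrite /act_word foldr_cat -/(act_word w2 _) w2_act -/(act_word w1 _) w1_act.
by congr pair; apply/ffunP => X; rewrite !ffunE.
Qed.

Lemma eq_word_relabels a f1 f2 : f1 =1 f2 -> word_relabels a f1 -> word_relabels a f2.
Proof.
move=> eq_f [w w_ok w_act]; exists w => // g.
by rewrite w_act; congr pair; apply/ffunP => X; rewrite !ffunE eq_f.
Qed.

Lemma word_relabels_adjacent a p : 0 < p -> p < n ->
  arcs_sym a -> arcs_loopless a -> valence a (inord p) = valence a (inord p.+1) ->
  word_relabels a (tperm (inord p : I) (inord p.+1)).
Proof.
move=> p_pos lt_pn sym_a loop_a val_eq; exists [:: (p, p.+1)].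
  by rewrite /cactus_word /= p_pos ltnSn lt_pn.
move=> g; rewrite /act_word /= /cactus_act /= (act_arcs_adjacent _ _ _ sym_a loop_a val_eq) //.
by congr pair; apply/ffunP => X; rewrite !ffunE refl_adjacentE.
Qed.

Lemma word_relabels_conj a p q f : 0 < p -> p < q -> q <= n ->
  arcs_sym a -> noncrossing a -> word_relabels (act_arcs p q a) f ->
  word_relabels a (refl p q \o f \o refl p q).
Proof.
move=> p_pos lt_pq le_qn sym_a nc_a [w w_ok w_act].
exists ((p, q) :: w ++ [:: (p, q)]).
  by rewrite /cactus_word /= all_cat -/(cactus_word w) w_ok /= p_pos lt_pq le_qn.
move=> g; rewrite /act_word /= foldr_cat /= -/(act_word w _) /cactus_act /= w_act /=.
by rewrite act_arcsK //; congr pair; apply/ffunP => X; rewrite !ffunE.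
Qed.

Lemma word_relabels_tperm a (P Q : I) : arcs_sym a -> arcs_loopless a -> noncrossing a ->
  P != ord0 -> Q != ord0 -> valence a P = valence a Q -> word_relabels a (tperm P Q).
Proof.
move=> sym_a loop_a nc_a.
wlog lt_PQ : P Q / P < Q => [lt_case P0 Q0 val_PQ|P0 Q0 val_PQ].
  case: (ltngtP P Q) => [lt_PQ|lt_QP|/ord_inj <-]; first exact: lt_case.
    by apply: eq_word_relabels (lt_case Q P lt_QP _ _ _) => // X; rewrite tpermC.
  by apply: eq_word_relabels (word_relabels_id a) => X; rewrite tperm1 perm1.
have P_pos : 0 < P by rewrite lt0n; move: P0; rewrite -(inj_eq (@ord_inj _)).
have le_Qn : Q <= n by rewrite -ltnS.
have [Q_adj|lt_P1Q] : Q = P.+1 :> nat \/ P.+1 < Q by lia.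
  have eP : inord P = P by rewrite inord_val.
  have eQ : inord P.+1 = Q by apply: ord_inj; rewrite inordK; lia.
  apply: eq_word_relabels (word_relabels_adjacent P_pos _ sym_a loop_a _) => [X||].
  - by rewrite eP eQ.
  - by rewrite -Q_adj -ltnS.
  - by rewrite eP eQ.
have rP : refl P.+1 Q (inord P) = P by rewrite inord_val refl_out // /inside ltnn.
have rP1 : refl P.+1 Q (inord P.+1) = Q.
  by apply: ord_inj; rewrite val_refl // /inside inordK; [rewrite leqnn ltnW //=; lia | lia].
have adj : word_relabels (act_arcs P.+1 Q a) (tperm (inord P : I) (inord P.+1)).
  apply: word_relabels_adjacent => //; first lia.
  - exact: act_arcs_sym.
  - exact: act_arcs_loopless.
  - by rewrite !valence_act_arcs // rP rP1.
apply: eq_word_relabels (word_relabels_conj _ _ _ sym_a nc_a adj) => //= X.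
by rewrite /comp tperm_conj_involutive ?rP ?rP1 //; apply: reflK.
Qed.
End Relabelling.

Theorem mainTheorem3 (n : nat) (l : 'I_n.+1 -> nat) (x : raw_diagram n)
  (S : {set 'I_n.+1}) (sigma : {perm 'I_n.+1}) :
  is_arc_diagram l x ->
  ord0 \notin S ->
  {in S &, forall i j, l i = l j} ->
  perm_on S sigma ->
  forall y : raw_diagram n,
    (forall P, sigma (dlab y P) = dlab x P) ->
    darcs y = darcs x ->
    same_Jn_orbit x y.
Proof.
case: x => f a [[f_inj f0] sym_a loop_a nc_a val_f] S0 l_S sigma_S [g b] /= sigma_g ->.
set tau := (perm f_inj * sigma^-1 * (perm f_inj)^-1)%g.
have f_tau X : f (tau X) = (sigma^-1)%g (f X).
  by rewrite !permM -[f _](permE f_inj) permKV permE.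
have tau_on : perm_on [set X | f X \in S] tau.
  apply/subsetP => X; rewrite !inE; apply: contraR => fX_out; apply/eqP/f_inj.
  by rewrite f_tau (out_perm (perm_onV sigma_S)).
have val_l P : valence a P = l (f P) := val_f P.
have [w w_ok w_act] : word_relabels a tau.
  apply: (perm_on_tperm_ind (Pr := fun s : {perm _} => word_relabels a s) _ _ tau_on)
    => [|s X Y]; first by apply: eq_word_relabels (word_relabels_id a) => X; rewrite perm1.
  rewrite !inE => fX_S fY_S _ s_ok.
  have nonzero Z : f Z \in S -> Z != ord0 by apply: contraTneq => ->; rewrite f0.
  have val_XY : valence a X = valence a Y by rewrite !val_l; apply: l_S.
  have t_ok := word_relabels_tperm sym_a loop_a nc_a (nonzero _ fX_S) (nonzero _ fY_S) val_XY.
  by apply: eq_word_relabels (word_relabels_comp s_ok t_ok) => Z; rewrite permM.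
exists w; split => //; rewrite -/(act_word w (f, a)) w_act; congr pair.
by apply/ffunP => X; rewrite ffunE f_tau -sigma_g permK.
Qed.
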